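(* Let $L\ge1$ be an integer and $x_i(k)$, $i\in\mathbb Z$, $k\ge0$, real numbers. For each $i\in\mathbb Z$ and $j\in\{0,1,\dots,L\}$ define $z_{ij}(k)$ for integers $k$ as follows. If $k<j$, $z_{ij}(k)=0$. For each $s\ge j$ with $s\equiv j \pmod{L+1}$: $z_{ij}(s)=\frac{1}{2L+1}x_i(s)$; $z_{ij}(s+1)=z_{ij}(s)+z_{(i-1)j}(s)+z_{(i+1)j}(s)$; if $L\ge2$: $z_{ij}(s+2)=z_{ij}(s+1)+(z_{(i-1)j}(s+1)-z_{(i-1)j}(s))+(z_{(i+1)j}(s+1)-z_{(i+1)j}(s))-2z_{ij}(s)$; and for $3\le m\le L$: $z_{ij}(s+m)=z_{ij}(s+m-1)+(z_{(i-1)j}(s+m-1)-z_{(i-1)j}(s+m-2))+(z_{(i+1)j}(s+m-1)-z_{(i+1)j}(s+m-2))-(z_{ij}(s+m-2)-z_{ij}(s+m-3))$. (Thus each $z_{ij}(k)$, $k\ge j$, is determined by the cycle $s\le k\le s+L$ containing $k$.) For $k\ge0$ let $j_k\in\{0,\dots,L\}$ with $j_k\equiv k\pmod{L+1}$ and set $$y_i(k)=z_{ij_k}(k)+\sum_{l\in\{0,\dots,L\},\,l\neq j_k}\big(z_{il}(k)-z_{il}(k-1)\big).$$ Then for all $i$: if $k\le L$, $$y_i(k)=\frac{1}{2L+1}\Big(x_i(k)+\sum_{j=1}^{k}\big(x_{i-j}(k-j)+x_{i+j}(k-j)\big)\Big),$$ and if $k>L$, $$y_i(k)=\frac{1}{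2L+1}\Big(x_i(k)+\sum_{j=1}^{L}\big(x_{i-j}(k-j)+x_{i+j}(k-j)\big)\Big).$$
   Context: Sensors indexed by $i\in\mathbb Z$ on a line with time-varying measurements $x_i(k)$; sensor $i$ maintains an auxiliary vector $(z_{i0}(k),\dots,z_{iL}(k))$ and a consensus variable $y_i(k)$, and communicates only with sensors $i\pm1$. *)

From Stdlib Require Import Reals Lra Lia ZArith Arith List.
Open Scope R_scope.

Definition sumR (f : nat -> R) (l : list nat) : R :=
  fold_right (fun a acc => f a + acc) 0 l.

(* z j k i  represents  z_{ij}(k)  (j in 0..L, time k, sensor i). *)
(* y_i(k) = z_{i j_k}(k) + sum_{l in 0..L, l <> j_k} (z_{il}(k) - z_{il}(k-1)),
   with j_k = k mod (L+1).  For k = 0 the truncated k-1 = 0 is harmless,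
   since z_{il}(0) = 0 = z_{il}(-1) for l >= 1. *)
Definition yval (L : nat) (z : nat -> nat -> Z -> R) (i : Z) (k : nat) : R :=
  let jk := (k mod (L + 1))%nat in
  z jk k i +
  sumR (fun l => if Nat.eqb l jk then 0 else z l k i - z l (k - 1)%nat i)
       (seq 0 (L + 1)).

From Stdlib Require Import Reals Lra Lia ZArith Arith List Permutation.
Open Scope R_scope.

(* Write n = L + 1 and c = 1/(2L+1).  Each auxiliary channel
   z_{.j} restarts every n steps (at the times s >= j with s = j mod n), and
   within a cycle its increments are explicit: by strong induction on m,
     z_{ij}(s+m) - z_{ij}(s+m-1) = c (x_{i-m}(s) + x_{i+m}(s))   (1 <= m <= L),
   i.e. the channel has collected the measurements of the two sensors at
   distance m taken when the cycle started.  At time k with j_k = k mod n,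
   channel l <> j_k started its current cycle  a = (j_k - l) mod n  steps ago
   (or has not started yet when k < l, contributing 0), so its increment is
   the distance-a pair of measurements taken at time k - a.  As l ranges over
   0..L the "age" a ranges over a permutation of 0..L with j_k itself of age 0,
   so y_i(k) = c x_i(k) plus the sum of these contributions over a = 1..L,
   and the contributions with a > k vanish. *)

Lemma sumR_ext_in (f g : nat -> R) (l : list nat) :
  (forall a, In a l -> f a = g a) -> sumR f l = sumR g l.
Proof.
  induction l as [|a l IH]; intros Hfg; simpl; [reflexivity|].
  rewrite Hfg by (left; reflexivity).
  rewrite IH; [reflexivity|intros b Hb; apply Hfg; right; exact Hb].
Qed.

Lemma sumR_map (f : nat -> R) (s : nat -> nat) (l : list nat) :
  sumR (fun a => f (s a)) l = sumR f (map s l).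
Proof. induction l as [|a l IH]; simpl; [reflexivity|]; now rewrite IH. Qed.

Lemma sumR_perm (f : nat -> R) (l l' : list nat) :
  Permutation l l' -> sumR f l = sumR f l'.
Proof. intros Hp; induction Hp; simpl; lra. Qed.

Lemma sumR_app (f : nat -> R) (l l' : list nat) :
  sumR f (l ++ l') = sumR f l + sumR f l'.
Proof. induction l as [|a l IH]; simpl; lra. Qed.

Lemma sumR_zero (l : list nat) : sumR (fun _ => 0) l = 0.
Proof. induction l as [|a l IH]; simpl; lra. Qed.

Lemma sumR_scale (c : R) (f : nat -> R) (l : list nat) :
  sumR (fun a => c * f a) l = c * sumR f l.
Proof. induction l as [|a l IH]; simpl; [lra|]; rewrite IH; lra. Qed.

Lemma mod_of_decomp (n a q r : nat) :
  (r < n)%nat -> a = (n * q + r)%nat -> (a mod n = r)%nat.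
Proof. intros Hr Ha; symmetry; eapply Nat.mod_unique; eauto. Qed.

(* The age, at a time with residue r mod n, of a channel restarting at the
   times congruent to l mod n: the number of steps since its last restart. *)
Definition age (n r l : nat) : nat := ((r + n - l) mod n)%nat.

Lemma age_explicit (n r l : nat) :
  (r < n)%nat -> (l < n)%nat ->
  age n r l = if (l <=? r)%nat then (r - l)%nat else (r + n - l)%nat.
Proof.
  intros Hr Hl; unfold age.
  destruct (Nat.leb_spec l r).
  - apply mod_of_decomp with (q := 1%nat); lia.
  - apply mod_of_decomp with (q := 0%nat); lia.
Qed.

Lemma age_perm (n r : nat) :
  (r < n)%nat -> Permutation (seq 0 n) (map (age n r) (seq 0 n)).
Proof.
  intros Hr; apply NoDup_Permutation_bis.
  - apply seq_NoDup.
  - now rewrite length_map.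
  - intros a Ha; apply in_seq in Ha; apply in_map_iff.
    destruct (Nat.leb_spec a r).
    + exists (r - a)%nat; split; [|apply in_seq; lia].
      rewrite age_explicit by lia.
      destruct (Nat.leb_spec (r - a) r); lia.
    + exists (r + n - a)%nat; split; [|apply in_seq; lia].
      rewrite age_explicit by lia.
      destruct (Nat.leb_spec (r + n - a) r); lia.
Qed.

Lemma sumR_age (f : nat -> R) (n r : nat) :
  (r < n)%nat -> sumR (fun l => f (age n r l)) (seq 0 n) = sumR f (seq 0 n).
Proof. intros Hr; rewrite sumR_map; symmetry; now apply sumR_perm, age_perm. Qed.

Definition delayed_pair (x : Z -> nat -> R) (i : Z) (k m : nat) : R :=
  x (i - Z.of_nat m)%Z (k - m)%nat + x (i + Z.of_nat m)%Z (k - m)%nat.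

(* What a channel of age m contributes to y_i(k): nothing for age 0 or for a
   channel that has not started yet (m > k), the weighted pair otherwise. *)
Definition contribution (L : nat) (x : Z -> nat -> R) (i : Z) (k m : nat) : R :=
  if orb (m =? 0)%nat (k <? m)%nat then 0
  else / INR (2 * L + 1) * delayed_pair x i k m.

Lemma sumR_contribution (L : nat) (x : Z -> nat -> R) (i : Z) (k : nat) :
  sumR (contribution L x i k) (seq 1 L)
  = / INR (2 * L + 1) * sumR (delayed_pair x i k) (seq 1 (Nat.min k L)).
Proof.
  replace (seq 1 L) with (seq 1 (Nat.min k L) ++ seq (1 + Nat.min k L) (L - Nat.min k L))
    by (rewrite <- seq_app; f_equal; lia).
  rewrite sumR_app, <- sumR_scale.
  rewrite (sumR_ext_in _ (fun _ => 0) (seq (1 + Nat.min k L) (L - Nat.min k L))), sumR_zero.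
  - rewrite Rplus_0_r; apply sumR_ext_in; intros a Ha; apply in_seq in Ha.
    unfold contribution.
    destruct (Nat.eqb_spec a 0), (Nat.ltb_spec k a); simpl; try lia; reflexivity.
  - intros a Ha; apply in_seq in Ha; unfold contribution.
    destruct (Nat.eqb_spec a 0), (Nat.ltb_spec k a); simpl; try lia; reflexivity.
Qed.

Section Cycles.

Variables (L : nat) (x : Z -> nat -> R) (z : nat -> nat -> Z -> R).

Hypothesis z_not_started : forall (i : Z) (j k : nat),
  (j <= L)%nat -> (k < j)%nat -> z j k i = 0.
Hypothesis z_restart : forall (i : Z) (j s : nat), (j <= L)%nat -> (j <= s)%nat ->
  ((s - j) mod (L + 1) = 0)%nat -> z j s i = / INR (2 * L + 1) * x i s.
Hypothesis z_step1 : forall (i : Z) (j s : nat), (j <= L)%nat -> (j <= s)%nat ->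
  ((s - j) mod (L + 1) = 0)%nat ->
  z j (s + 1)%nat i = z j s i + z j s (i - 1)%Z + z j s (i + 1)%Z.
Hypothesis z_step2 : forall (i : Z) (j s : nat), (j <= L)%nat -> (j <= s)%nat ->
  ((s - j) mod (L + 1) = 0)%nat -> (2 <= L)%nat ->
  z j (s + 2)%nat i =
    z j (s + 1)%nat i
    + (z j (s + 1)%nat (i - 1)%Z - z j s (i - 1)%Z)
    + (z j (s + 1)%nat (i + 1)%Z - z j s (i + 1)%Z)
    - 2 * z j s i.
Hypothesis z_step : forall (i : Z) (j s m : nat), (j <= L)%nat -> (j <= s)%nat ->
  ((s - j) mod (L + 1) = 0)%nat -> (3 <= m)%nat -> (m <= L)%nat ->
  z j (s + m)%nat i =
    z j (s + m - 1)%nat i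
    + (z j (s + m - 1)%nat (i - 1)%Z - z j (s + m - 2)%nat (i - 1)%Z)
    + (z j (s + m - 1)%nat (i + 1)%Z - z j (s + m - 2)%nat (i + 1)%Z)
    - (z j (s + m - 2)%nat i - z j (s + m - 3)%nat i).

Lemma z_increment (j s : nat) :
  (j <= L)%nat -> (j <= s)%nat -> ((s - j) mod (L + 1) = 0)%nat ->
  forall m i, (1 <= m <= L)%nat ->
  z j (s + m)%nat i - z j (s + m - 1)%nat i
  = / INR (2 * L + 1) * (x (i - Z.of_nat m)%Z s + x (i + Z.of_nat m)%Z s).
Proof.
  intros Hj Hs Hstart m; induction m as [m IH] using lt_wf_ind; intros i Hm.
  destruct (Nat.eq_dec m 1) as [->|Hm1].
  { replace (s + 1 - 1)%nat with s by lia.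
    rewrite z_step1, (z_restart (i - 1)%Z), (z_restart (i + 1)%Z) by auto.
    simpl Z.of_nat; lra. }
  destruct (Nat.eq_dec m 2) as [->|Hm2].
  { pose proof (IH 1%nat ltac:(lia) (i - 1)%Z ltac:(lia)) as Hleft.
    pose proof (IH 1%nat ltac:(lia) (i + 1)%Z ltac:(lia)) as Hright.
    replace (s + 1 - 1)%nat with s in Hleft, Hright by lia.
    replace (s + 2 - 1)%nat with (s + 1)%nat by lia.
    rewrite z_step2, (z_restart i j s) by (auto; lia).
    replace (i - 1 - Z.of_nat 1)%Z with (i - Z.of_nat 2)%Z in Hleft by lia.
    replace (i - 1 + Z.of_nat 1)%Z with i in Hleft by lia.
    replace (i + 1 - Z.of_nat 1)%Z with i in Hright by lia.
    replace (i + 1 + Z.of_nat 1)%Z with (i + Z.of_nat 2)%Z in Hright by lia.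
    lra. }
  pose proof (IH (m - 1)%nat ltac:(lia) (i - 1)%Z ltac:(lia)) as Hleft.
  pose proof (IH (m - 1)%nat ltac:(lia) (i + 1)%Z ltac:(lia)) as Hright.
  pose proof (IH (m - 2)%nat ltac:(lia) i ltac:(lia)) as Hself.
  replace (s + (m - 1))%nat with (s + m - 1)%nat in Hleft, Hright by lia.
  replace (s + m - 1 - 1)%nat with (s + m - 2)%nat in Hleft, Hright by lia.
  replace (s + (m - 2))%nat with (s + m - 2)%nat in Hself by lia.
  replace (s + m - 2 - 1)%nat with (s + m - 3)%nat in Hself by lia.
  replace (i - 1 - Z.of_nat (m - 1))%Z with (i - Z.of_nat m)%Z in Hleft by lia.
  replace (i - 1 + Z.of_nat (m - 1))%Z with (i + Z.of_nat m - 2)%Z in Hleft by lia.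
  replace (i + 1 - Z.of_nat (m - 1))%Z with (i - Z.of_nat m + 2)%Z in Hright by lia.
  replace (i + 1 + Z.of_nat (m - 1))%Z with (i + Z.of_nat m)%Z in Hright by lia.
  replace (i - Z.of_nat (m - 2))%Z with (i - Z.of_nat m + 2)%Z in Hself by lia.
  replace (i + Z.of_nat (m - 2))%Z with (i + Z.of_nat m - 2)%Z in Hself by lia.
  rewrite z_step by (auto; lia); lra.
Qed.

Lemma channel_term (i : Z) (k l : nat) :
  (l <= L)%nat ->
  (if (l =? k mod (L + 1))%nat then 0 else z l k i - z l (k - 1)%nat i)
  = contribution L x i k (age (L + 1) (k mod (L + 1)) l).
Proof.
  intros Hl.
  pose proof (Nat.div_mod_eq k (L + 1)) as Hk.
  set (q := (k / (L + 1))%nat) in Hk; set (r := (k mod (L + 1))%nat) in *.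
  assert (Hr : (r < L + 1)%nat) by (apply Nat.mod_upper_bound; lia).
  rewrite age_explicit by lia; unfold contribution.
  destruct (Nat.eqb_spec l r) as [->|Hlr].
  { now rewrite Nat.leb_refl, Nat.sub_diag. }
  assert (Hincr : forall a q', (1 <= a <= L)%nat -> k = ((L + 1) * q' + l + a)%nat ->
            z l k i - z l (k - 1)%nat i = / INR (2 * L + 1) * delayed_pair x i k a).
  { intros a q' Ha Hq'.
    pose proof (z_increment l (k - a) Hl ltac:(lia)
                  ltac:(apply mod_of_decomp with (q := q'); lia) a i Ha) as Hz.
    replace (k - a + a)%nat with k in Hz by lia.
    replace (k - a + a - 1)%nat with (k - 1)%nat in Hz by lia.
    exact Hz. }
  destruct (Nat.leb_spec l r).
  - (* l restarted in the current period of length L + 1 *)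
    destruct (Nat.eqb_spec (r - l) 0), (Nat.ltb_spec k (r - l)); simpl; try lia.
    apply (Hincr _ q); lia.
  - destruct (Nat.eqb_spec (r + (L + 1) - l) 0); simpl; try lia.
    destruct (Nat.le_gt_cases l k) as [Hlk|Hkl].
    + (* l restarted in the previous period *)
      assert (Hq : (1 <= q)%nat) by (destruct q; lia).
      destruct (Nat.ltb_spec k (r + (L + 1) - l)); simpl; [nia|].
      apply (Hincr _ (q - 1)%nat); [lia|].
      rewrite Nat.mul_sub_distr_l; nia.
    + (* l has not started yet, and then k < L + 1 *)
      assert (Hkr : k = r) by (destruct q; nia).
      destruct (Nat.ltb_spec k (r + (L + 1) - l)); simpl; [|lia].
      rewrite (z_not_started i l k), (z_not_started i l (k - 1)%nat) by lia; lra.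
Qed.

Lemma yval_contributions (i : Z) (k : nat) :
  yval L z i k = / INR (2 * L + 1) * x i k + sumR (contribution L x i k) (seq 1 L).
Proof.
  unfold yval.
  assert (Hr : (k mod (L + 1) < L + 1)%nat) by (apply Nat.mod_upper_bound; lia).
  rewrite (sumR_ext_in _ (fun l => contribution L x i k (age (L + 1) (k mod (L + 1)) l)))
    by (intros l Hl; apply in_seq in Hl; apply channel_term; lia).
  rewrite sumR_age by exact Hr.
  assert (Hstart : ((k - k mod (L + 1)) mod (L + 1) = 0)%nat).
  { apply mod_of_decomp with (q := (k / (L + 1))%nat); [lia|].
    pose proof (Nat.div_mod_eq k (L + 1)); lia. }
  rewrite (z_restart i) by (exact Hstart || apply Nat.Div0.mod_le || lia).
  replace (L + 1)%nat with (S L) by lia; simpl sumR.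
  unfold contribution at 1; simpl; lra.
Qed.

End Cycles.

Theorem theorem5 (L : nat) (HL : (1 <= L)%nat)
  (x : Z -> nat -> R) (z : nat -> nat -> Z -> R)
  (Hz0 : forall (i : Z) (j k : nat), (j <= L)%nat -> (k < j)%nat -> z j k i = 0)
  (Hz1 : forall (i : Z) (j s : nat), (j <= L)%nat -> (j <= s)%nat ->
     ((s - j) mod (L + 1) = 0)%nat ->
     z j s i = / INR (2 * L + 1) * x i s)
  (Hz2 : forall (i : Z) (j s : nat), (j <= L)%nat -> (j <= s)%nat ->
     ((s - j) mod (L + 1) = 0)%nat ->
     z j (s + 1)%nat i = z j s i + z j s (i - 1)%Z + z j s (i + 1)%Z)
  (Hz3 : forall (i : Z) (j s : nat), (j <= L)%nat -> (j <= s)%nat ->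
     ((s - j) mod (L + 1) = 0)%nat -> (2 <= L)%nat ->
     z j (s + 2)%nat i =
       z j (s + 1)%nat i
       + (z j (s + 1)%nat (i - 1)%Z - z j s (i - 1)%Z)
       + (z j (s + 1)%nat (i + 1)%Z - z j s (i + 1)%Z)
       - 2 * z j s i)
  (Hzm : forall (i : Z) (j s m : nat), (j <= L)%nat -> (j <= s)%nat ->
     ((s - j) mod (L + 1) = 0)%nat -> (3 <= m)%nat -> (m <= L)%nat ->
     z j (s + m)%nat i =
       z j (s + m - 1)%nat i
       + (z j (s + m - 1)%nat (i - 1)%Z - z j (s + m - 2)%nat (i - 1)%Z)
       + (z j (s + m - 1)%nat (i + 1)%Z - z j (s + m - 2)%nat (i + 1)%Z)
       - (z j (s + m - 2)%nat i - z j (s + m - 3)%nat i)) :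
  forall (i : Z) (k : nat),
    ((k <= L)%nat ->
      yval L z i k =
        / INR (2 * L + 1) *
        (x i k + sumR (fun j => x (i - Z.of_nat j)%Z (k - j)%nat
                              + x (i + Z.of_nat j)%Z (k - j)%nat) (seq 1 k)))
    /\
    ((L < k)%nat ->
      yval L z i k =
        / INR (2 * L + 1) *
        (x i k + sumR (fun j => x (i - Z.of_nat j)%Z (k - j)%nat
                              + x (i + Z.of_nat j)%Z (k - j)%nat) (seq 1 L))).
Proof.
  intros i k.
  rewrite (yval_contributions L x z Hz0 Hz1 Hz2 Hz3 Hzm), sumR_contribution.
  split; intros Hk.
  - rewrite Nat.min_l by exact Hk; unfold delayed_pair; lra.
  - rewrite Nat.min_r by lia; unfold delayed_pair; lra.
Qed.
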